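(* Under the dual metric loss, no algorithm that always produces a balanced clustering can achieve the $\alpha$-core for any $\alpha\ge1$; that is, for every $\alpha\ge1$ there exists a dual-metric-loss instance in which $k$ divides $n$ and no balanced clustering is in the $\alpha$-core.
   Context: Instance with dual metric loss: finite nonempty set $\mathcal{N}$ of $n$ agents, finite nonempty set $\mathcal{M}$ of feasible centers, positive integer $k$, pseudometric $d^m$ on $\mathcal{N}$, pseudometric $d^c$ on $\mathcal{N}\cup\mathcal{M}$; $\ell_i(C,x)=\max_{j\in C}d^m(i,j)+d^c(i,x)$ for $i\in C\subseteq\mathcal{N}$, $x\in\mathcal{M}$. A clustering is $\mathcal{X}=\{(C_1,x_1),\dots,(C_k,x_k)\}$ with $C_t$ pairwise disjoint (some possibly empty), union $\mathcal{N}$, $x_t\in\mathcal{M}$; $\ell_i(\mathcal{X})=\ell_i(C_t,x_t)$ where $i\in C_t$. It is balanced if, whenever $k$ divides $n$, $|C_t|=n/k$ for all $t$. For $\alpha\ge1$, $\mathcal{X}$ is in the $\alpha$-core if there is no $S\subseteq\mathcal{N}$ with $|S|\ge n/k$ and $y\in\mathcal{M}$ with $\alpha\,\ell_i(S,y)<\ell_i(\mathcal{X})$ for all $i\in S$. *)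

From mathcomp Require Import all_boot all_order all_algebra.
From mathcomp Require Import reals.
Set Implicit Arguments. Unset Strict Implicit. Unset Printing Implicit Defensive.
Import Order.TTheory GRing.Theory Num.Theory.
Local Open Scope ring_scope.

Definition pseudometric (R : realType) (T : Type) (d : T -> T -> R) : Prop :=
  [/\ forall x, d x x = 0,
      forall x y, d x y = d y x
    & forall x y z, d x z <= d x y + d y z].

(* Dual metric loss l_i(C, x) = max_{j in C} d^m(i,j) + d^c(i,x).
   The max is taken with default 0 (harmless: i \in C and d^m >= 0). *)
Definition dual_loss (R : realType) (N M : finType)
  (dm : N -> N -> R) (dc : (N + M)%type -> (N + M)%type -> R)
  (i : N) (C : {set N}) (x : M) : R :=
  \big[Order.max/0]_(j in C) dm i j + dc (inl i) (inr x).

(* A clustering with k (possibly empty) clusters: cluster t is (clC t, clx t). *)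
Record clustering (N M : finType) (k : nat) := Clustering {
  clC : 'I_k -> {set N};
  clx : 'I_k -> M }.

Definition is_clustering (N M : finType) (k : nat) (X : clustering N M k) : Prop :=
  (forall t u : 'I_k, t != u -> [disjoint clC X t & clC X u]) /\
  (\bigcup_(t < k) clC X t = [set: N]).

Definition balanced (N M : finType) (k : nat) (X : clustering N M k) : Prop :=
  (k %| #|N|)%N -> forall t : 'I_k, #|clC X t| = (#|N| %/ k)%N.

Definition in_alpha_core (R : realType) (N M : finType) (k : nat)
  (dm : N -> N -> R) (dc : (N + M)%type -> (N + M)%type -> R)
  (alpha : R) (X : clustering N M k) : Prop :=
  ~ exists (S : {set N}) (y : M),
      (#|N|%:R / k%:R <= #|S|%:R :> R) /\
      forall i, i \in S -> forall t : 'I_k, i \in clC X t ->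
        alpha * dual_loss dm dc i S y < dual_loss dm dc i (clC X t) (clx X t).

From mathcomp Require Import all_boot all_order all_algebra.
From mathcomp Require Import reals.
From mathcomp Require Import lra.
Set Implicit Arguments. Unset Strict Implicit. Unset Printing Implicit Defensive.
Import Order.TTheory GRing.Theory Num.Theory.
Local Open Scope ring_scope.

(* Take four agents, three centers and k = 2. Agents 0, 1, 2 sit at centers 0, 1, 2
   and agent 3 at center 0, with d^c the 0/1 metric on sites; under d^m agents 0, 1, 2
   coincide while agent 3 is at distance alpha + 1 from all of them. A balanced
   clustering pairs agent 3 with some agent p, and the other two agents around a
   center x. Some agent i outside {3, p} does not sit at x, and {i, p} with center i
   blocks: the loss of i drops from at least 1 to 0, that of p from at least
   alpha + 1 to 1. *)

Definition discrete_dist (R : realType) (T : Type) (U : eqType) (f : T -> U) (c : R)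
    (x y : T) : R :=
  if f x == f y then 0 else c.

Section DiscreteDist.
Variables (R : realType) (T : Type) (U : eqType) (f : T -> U) (c : R).

Lemma discrete_dist_ge0 x y : 0 <= c -> 0 <= discrete_dist f c x y.
Proof. by rewrite /discrete_dist; case: ifP. Qed.

Lemma discrete_dist_pseudometric : 0 <= c -> pseudometric (discrete_dist f c).
Proof.
move=> c_ge0; split=> [x | x y | x y z]; rewrite /discrete_dist ?eqxx //.
  by rewrite eq_sym.
case: (eqVneq (f x) (f y)) => [->|_]; first by rewrite add0r.
by case: ifP => _; case: ifP => _; lra.
Qed.

End DiscreteDist.

Section DualLoss.
Variables (R : realType) (N M : finType).
Variables (dm : N -> N -> R) (dc : (N + M)%type -> (N + M)%type -> R).

Lemma dual_loss_ge (i j : N) (C : {set N}) (x : M) :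
  j \in C -> dm i j + dc (inl i) (inr x) <= dual_loss dm dc i C x.
Proof. by move=> jC; rewrite lerD2r (le_bigmax_cond _ _ jC). Qed.

Lemma dual_loss_dm0 (i : N) (C : {set N}) (x : M) :
  {in C, forall j, dm i j = 0} -> dual_loss dm dc i C x = dc (inl i) (inr x).
Proof. by move=> dm0; rewrite /dual_loss bigmax_eq_id ?add0r // => j /dm0 ->. Qed.

End DualLoss.

Lemma exists_notin (T : finType) (s : seq T) : (size s < #|T|)%N -> exists x : T, x \notin s.
Proof.
move=> lt_s; suff /subsetPn [x _ xs] : ~~ ([set: T] \subset s) by exists x.
apply: contraTN lt_s => /subset_leq_card le_T_s.
by rewrite -leqNgt (leq_trans _ (card_size s)) // -cardsT.
Qed.

Lemma cards2_mem (T : finType) (A : {set T}) (x : T) :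
  #|A| = 2%N -> x \in A -> exists2 y, y != x & A = [set x; y].
Proof.
move=> A2 xA; have /cards1P [y Ax] : #|A :\ x| == 1%N.
  by move: A2; rewrite (cardsD1 x) xA add1n => -[->].
have : y \in A :\ x by rewrite Ax set11.
rewrite !inE => /andP [yx _]; exists y => //.
by rewrite -(setD1K xA) Ax.
Qed.

Section Clustering.
Variables (N M : finType) (k : nat) (X : clustering N M k).
Hypothesis X_clustering : is_clustering X.

Lemma cluster_cover (i : N) : exists t, i \in clC X t.
Proof.
have : i \in \bigcup_(t < k) clC X t by rewrite X_clustering.2 inE.
by case/bigcupP => t _; exists t.
Qed.

Lemma cluster_unique (i : N) (t u : 'I_k) : i \in clC X t -> i \in clC X u -> t = u.
Proof.
move=> it iu; case: (eqVneq t u) => // tu.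
by rewrite (disjointFr (X_clustering.1 _ _ tu) it) in iu.
Qed.

End Clustering.

Lemma ord2_neq (t u v : 'I_2) : t != v -> u != v -> t = u.
Proof. by case: t u v => [[|[|?]] ?] [[|[|?]] ?] [[|[|?]] ?] //= *; apply: val_inj. Qed.

Definition outlier : 'I_4 := ord_max.

Definition site (i : 'I_4) : 'I_3 := inord (i %% 3).

Definition position (u : ('I_4 + 'I_3)%type) : 'I_3 :=
  match u with inl i => site i | inr x => x end.

Definition agent_dist (R : realType) (alpha : R) : 'I_4 -> 'I_4 -> R :=
  discrete_dist (fun i => i == outlier) (alpha + 1).

Definition center_dist (R : realType) : ('I_4 + 'I_3)%type -> ('I_4 + 'I_3)%type -> R :=
  discrete_dist position 1.

Lemma site_widen (y : 'I_3) : site (widen_ord (leqnSn 3) y) = y.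
Proof. by apply: val_inj; rewrite /site /= modn_small // inordK // ltnW. Qed.

Lemma widen_neq_outlier (y : 'I_3) : widen_ord (leqnSn 3) y != outlier.
Proof. by rewrite -val_eqE /= neq_ltn ltn_ord. Qed.

Section Instance.
Variables (R : realType) (alpha : R).

Lemma agent_dist_inliers (a b : 'I_4) :
  a != outlier -> b != outlier -> agent_dist alpha a b = 0.
Proof. by move=> /negbTE a_in /negbTE b_in; rewrite /agent_dist /discrete_dist a_in b_in. Qed.

Lemma balanced_not_in_core (X : clustering 'I_4 'I_3 2) :
  is_clustering X -> balanced X -> ~ in_alpha_core (agent_dist alpha) (center_dist R) alpha X.
Proof.
move=> Xcl Xbal; apply.
have [t3 out_t3] := cluster_cover Xcl outlier.
have card_t3 : #|clC X t3| = 2%N by rewrite Xbal card_ord.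
have [p p_out Ct3] := cards2_mem card_t3 out_t3.
pose t' := lift t3 ord0.
have [y] : exists y : 'I_3, y \notin [:: clx X t'; site p] by apply: exists_notin; rewrite card_ord.
rewrite !inE negb_or => /andP [y_x y_p].
pose i := widen_ord (leqnSn 3) y.
have i_out : i != outlier := widen_neq_outlier y.
have i_p : i != p by apply: contraNneq y_p => <-; rewrite site_widen.
have i_t' : i \in clC X t'.
  have [t i_t] := cluster_cover Xcl i.
  suff t_t3 : t != t3 by rewrite -(ord2_neq t_t3 (_ : t' != t3)) // eq_sym neq_lift.
  by apply: contraNneq i_out => t_eq; move: i_t; rewrite t_eq Ct3 !inE (negbTE i_p) orbF.
have S_dm0 j : j \in [set i; p] -> {in [set i; p], forall l, agent_dist alpha j l = 0}.
  by rewrite !inE => j_S l; rewrite !inE => l_S; apply: agent_dist_inliers;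
    [case/orP: j_S | case/orP: l_S] => /eqP->.
exists [set i; p], y; split.
  by rewrite card_ord cards2 i_p /=; lra.
move=> j j_S t j_t; rewrite dual_loss_dm0; last exact: S_dm0.
move: j_S j_t; rewrite !inE => /orP [] /eqP-> j_t.
- rewrite (cluster_unique Xcl j_t i_t') /center_dist /discrete_dist /= site_widen eqxx mulr0.
  apply: lt_le_trans (dual_loss_ge _ _ _ _ i_t').
  by rewrite /agent_dist /center_dist /discrete_dist /= site_widen eqxx (negbTE y_x) add0r ltr01.
- have p_t3 : p \in clC X t3 by rewrite Ct3 set22.
  have p_y : site p != y by rewrite eq_sym.
  have dc_py : center_dist R (inl p) (inr y) = 1.
    by rewrite /center_dist /discrete_dist /= (negbTE p_y).
  have dm_p : agent_dist alpha p outlier = alpha + 1.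
    by rewrite /agent_dist /discrete_dist (negbTE p_out) eqxx.
  have dc_ge0 : 0 <= center_dist R (inl p) (inr (clx X t3)) := discrete_dist_ge0 _ _ _ ler01.
  have := dual_loss_ge (agent_dist alpha) (center_dist R) p (clx X t3) out_t3.
  rewrite (cluster_unique Xcl j_t p_t3) dc_py dm_p; lra.
Qed.

End Instance.

Theorem mainTheorem17 (R : realType) (alpha : R) :
  1 <= alpha ->
  exists (N M : finType) (k : nat) (dm : N -> N -> R)
         (dc : (N + M)%type -> (N + M)%type -> R),
    [/\ (0 < #|N|)%N, (0 < #|M|)%N, (0 < k)%N & (k %| #|N|)%N] /\
    pseudometric dm /\ pseudometric dc /\
    forall X : clustering N M k,
      is_clustering X -> balanced X -> ~ in_alpha_core dm dc alpha X.
Proof.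
move=> alpha_ge1.
exists 'I_4, 'I_3, 2%N, (agent_dist alpha), (center_dist R).
split; first by rewrite !card_ord.
split; first by apply: discrete_dist_pseudometric; lra.
split; first exact: discrete_dist_pseudometric ler01.
exact: balanced_not_in_core.
Qed.
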